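(* The Hilbert calculus ${\bf Tm4d}$ is sound and complete with respect to the Nmatrix $\mathcal M_{\bf Tm4d}$: for every $\Gamma\cup\{\alpha\}\subseteq For$, $\Gamma\vdash_{\bf Tm4d}\alpha$ iff $\Gamma\vDash_{\mathcal M_{\bf Tm4d}}\alpha$.
   Context: Formulas are built from a denumerable set of propositional variables by the unary connectives $\neg$, $\Box$ and the binary connective $\to$; $For$ is the set of all formulas. Abbreviations: $\Diamond\alpha:=\neg\Box\neg\alpha$, $\alpha\vee\beta:=\neg\alpha\to\beta$. ${\bf Tm4d}$ is the Hilbert calculus whose axioms are all instances (over $For$) of the axiom schemas of a standard Hilbert calculus for classical propositional logic in the signature $\{\neg,\to\}$, plus all instances of: (K) $\Box(\alpha\to\beta)\to(\Box\alpha\to\Box\beta)$; (Kdet) $\Box(\alpha\to\beta)\to(\Diamond\alpha\to\Box\beta)$; (K2) $\Diamond(\alpha\to\beta)\to(\Box\alpha\to\Diamond\beta)$; (M1) $\neg\Diamond\alpha\to\Box(\alpha\to\beta)$; (M2) $\Box\beta\to\Box(\alpha\to\beta)$; (M3) $\Diamond\beta\to\Diamond(\alpha\to\beta)$; (M4) $\Diamond\neg\alpha\to\Diamond(\alpha\to\beta)$; (T) $\Box\alpha\to\alpha$; (DN1) $\Box\alpha\to\Box\neg\neg\alpha$; (DN2) $\Box\neg\neg\alpha\to\Box\alpha$; (4) $\Box\alpha\to\Box\Box\alpha$; modus ponens is the only rule. Nmatrix semantics: an Nmatrix has a domain $A$, designated values $D\subseteq A$ and, for each connective, a multioperation giving nonempty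 subsets of $A$; a valuation is $v:For\to A$ with $v(\neg\alpha)\in\tilde\neg(v(\alpha))$, $v(\Box\alpha)\in\tilde\Box(v(\alpha))$, $v(\alpha\to\beta)\in v(\alpha)\tilde\to v(\beta)$; $\Gamma\vDash\alpha$ iff every valuation designating all of $\Gamma$ designates $\alpha$. $\mathcal M_{\bf Tm4d}$: domain $\{T^+,C^+,C^-,F^-\}$, designated $\{T^+,C^+\}$; $\tilde\neg T^+=\{F^-\}$, $\tilde\neg C^+=\{C^-\}$, $\tilde\neg C^-=\{C^+\}$, $\tilde\neg F^-=\{T^+\}$; $\tilde\Box T^+=\{T^+\}$ and $\tilde\Box x=\{C^-,F^-\}$ for $x\neq T^+$; implication is deterministic: $x\tilde\to y=\{\max(n(x),y)\}$, where $n(T^+)=F^-$, $n(C^+)=C^-$, $n(C^-)=C^+$, $n(F^-)=T^+$ and the maximum is taken in the chain $F^-<C^-<C^+<T^+$. *)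

Inductive form : Type :=
| Var : nat -> form
| Neg : form -> form
| Box : form -> form
| Imp : form -> form -> form.

Definition Dia (a : form) : form := Neg (Box (Neg a)).

(** Axioms of Tm4d.  The classical propositional part is Mendelson's
    standard axiomatization in the signature {neg, ->}. *)
Inductive Tm4d_axiom : form -> Prop :=
| ax_A1 : forall a b, Tm4d_axiom (Imp a (Imp b a))
| ax_A2 : forall a b c,
    Tm4d_axiom (Imp (Imp a (Imp b c)) (Imp (Imp a b) (Imp a c)))
| ax_A3 : forall a b,
    Tm4d_axiom (Imp (Imp (Neg b) (Neg a)) (Imp (Imp (Neg b) a) b))
| ax_K : forall a b,
    Tm4d_axiom (Imp (Box (Imp a b)) (Imp (Box a) (Box b)))
| ax_Kdet : forall a b,
    Tm4d_axiom (Imp (Box (Imp a b)) (Imp (Dia a) (Box b)))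
| ax_K2 : forall a b,
    Tm4d_axiom (Imp (Dia (Imp a b)) (Imp (Box a) (Dia b)))
| ax_M1 : forall a b,
    Tm4d_axiom (Imp (Neg (Dia a)) (Box (Imp a b)))
| ax_M2 : forall a b,
    Tm4d_axiom (Imp (Box b) (Box (Imp a b)))
| ax_M3 : forall a b,
    Tm4d_axiom (Imp (Dia b) (Dia (Imp a b)))
| ax_M4 : forall a b,
    Tm4d_axiom (Imp (Dia (Neg a)) (Dia (Imp a b)))
| ax_T : forall a, Tm4d_axiom (Imp (Box a) a)
| ax_DN1 : forall a, Tm4d_axiom (Imp (Box a) (Box (Neg (Neg a))))
| ax_DN2 : forall a, Tm4d_axiom (Imp (Box (Neg (Neg a))) (Box a))
| ax_4 : forall a, Tm4d_axiom (Imp (Box a) (Box (Box a))).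

Inductive derives (Gamma : form -> Prop) : form -> Prop :=
| d_hyp : forall a, Gamma a -> derives Gamma a
| d_ax : forall a, Tm4d_axiom a -> derives Gamma a
| d_mp : forall a b, derives Gamma (Imp a b) -> derives Gamma a -> derives Gamma b.

Inductive V4 : Type := Tp | Cp | Cm | Fm.   (* T+, C+, C-, F- *)

Definition designated (x : V4) : Prop := x = Tp \/ x = Cp.

(* multioperations as predicates: y \in op(x) *)
Definition negM (x y : V4) : Prop :=
  match x with Tp => y = Fm | Cp => y = Cm | Cm => y = Cp | Fm => y = Tp end.

Definition boxM (x y : V4) : Prop :=
  match x with Tp => y = Tp | _ => y = Cm \/ y = Fm end.

Definition nV (x : V4) : V4 :=
  match x with Tp => Fm | Cp => Cm | Cm => Cp | Fm => Tp end.

Definition rank (x : V4) : nat :=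
  match x with Fm => 0 | Cm => 1 | Cp => 2 | Tp => 3 end.

Definition maxV (x y : V4) : V4 := if Nat.leb (rank x) (rank y) then y else x.

Definition impM (x y z : V4) : Prop := z = maxV (nV x) y.

Definition valuation (v : form -> V4) : Prop :=
  forall a b,
    negM (v a) (v (Neg a)) /\ boxM (v a) (v (Box a)) /\
    impM (v a) (v b) (v (Imp a b)).

Definition entails (Gamma : form -> Prop) (a : form) : Prop :=
  forall v, valuation v ->
    (forall g, Gamma g -> designated (v g)) -> designated (v a).

From Stdlib Require Import Classical ClassicalEpsilon Lia Cantor.

(* Soundness: every axiom is designated under every valuation, and modus
   ponens preserves designation.  Completeness: if [alpha] is not derivable
   from [Gamma], a Lindenbaum construction extends [Gamma] to a set [D] that is
   maximal among the sets not deriving [alpha].  Evaluate [phi] to T+ if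
   [Box phi] is in [D], to C+ if only [phi] is, to F- if [Box (Neg phi)] is, and
   to C- otherwise.  The axioms K, Kdet, K2, M1-M4, T, DN1, DN2 and 4 are exactly
   what makes this map respect the multioperations of the Nmatrix; it designates
   precisely the members of [D], hence all of [Gamma] but not [alpha]. *)

Lemma valuation_neg v : valuation v -> forall a, v (Neg a) = nV (v a).
Proof. intros Hv a. destruct (Hv a a) as [Hneg _]. destruct (v a); exact Hneg. Qed.

Lemma valuation_box v : valuation v -> forall a, boxM (v a) (v (Box a)).
Proof. intros Hv a. apply (Hv a a). Qed.

Lemma valuation_imp v : valuation v -> forall a b, v (Imp a b) = maxV (nV (v a)) (v b).
Proof. intros Hv a b. apply (Hv a b). Qed.

(* Once [Neg] and [Imp] are computed away, the only constraint on a value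
   [v (Box x)] is [boxM (v x) (v (Box x))], so the goal becomes a finite
   case check. *)
Ltac check_truth_table v Hv :=
  unfold Dia;
  repeat (rewrite (valuation_imp v Hv) || rewrite (valuation_neg v Hv));
  repeat match goal with
  | |- context [v (Box ?x)] =>
      lazymatch goal with
      | _ : boxM _ (v (Box x)) |- _ => fail
      | _ =>
          let H := fresh "Hbox" in
          pose proof (valuation_box v Hv x) as H;
          repeat (rewrite (valuation_imp v Hv) in H || rewrite (valuation_neg v Hv) in H)
      end
  end;
  repeat match goal with
  | _ : context [v ?x] |- _ =>
      let y := fresh "y" in set (y := v x) in *; clearbody y; destruct y
  | |- context [v ?x] =>
      let y := fresh "y" in set (y := v x) in *; clearbody y; destruct y
  end;
  simpl in *;
  repeat match goal with H : _ \/ _ |- _ => destruct H end;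
  try discriminate; cbv; auto.

Lemma axiom_designated v : valuation v -> forall a, Tm4d_axiom a -> designated (v a).
Proof. intros Hv a Ha. destruct Ha; check_truth_table v Hv. Qed.

Lemma designated_mp x y : designated (maxV (nV x) y) -> designated x -> designated y.
Proof. unfold designated. destruct x, y; simpl; intuition discriminate. Qed.

Lemma soundness Gamma a : derives Gamma a -> entails Gamma a.
Proof.
  intros Hder v Hv HGamma. induction Hder as [a Ha | a Ha | a b _ IHab _ IHa].
  - auto.
  - apply axiom_designated; auto.
  - rewrite (valuation_imp v Hv) in IHab. exact (designated_mp _ _ IHab IHa).
Qed.

Definition adjoin (Gamma : form -> Prop) (a : form) : form -> Prop :=
  fun x => Gamma x \/ x = a.

Lemma derives_mono (Gamma Gamma' : form -> Prop) a :
  (forall x, Gamma x -> Gamma' x) -> derives Gamma a -> derives Gamma' a.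
Proof.
  intros Hsub Hder. induction Hder.
  - apply d_hyp; auto.
  - apply d_ax; auto.
  - eapply d_mp; eauto.
Qed.

Lemma derives_imp_const Gamma a b : derives Gamma b -> derives Gamma (Imp a b).
Proof. apply d_mp, d_ax, ax_A1. Qed.

Lemma derives_imp_refl Gamma a : derives Gamma (Imp a a).
Proof.
  eapply d_mp; [eapply d_mp; [apply d_ax, (ax_A2 a (Imp a a) a) |] |];
    apply d_ax, ax_A1.
Qed.

Lemma derives_reductio Gamma a b :
  derives Gamma (Imp (Neg b) (Neg a)) -> derives Gamma (Imp (Neg b) a) -> derives Gamma b.
Proof. intros H1 H2. eapply d_mp; [eapply d_mp; [apply d_ax, ax_A3 | exact H1] | exact H2]. Qed.

Lemma deduction Gamma a b : derives (adjoin Gamma a) b -> derives Gamma (Imp a b).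
Proof.
  intro Hder. induction Hder as [x [Hx | ->] | x Hx | x y _ IHxy _ IHx].
  - apply derives_imp_const, d_hyp, Hx.
  - apply derives_imp_refl.
  - apply derives_imp_const, d_ax, Hx.
  - eapply d_mp; [eapply d_mp; [apply d_ax, ax_A2 | exact IHxy] | exact IHx].
Qed.

Fixpoint form_code (a : form) : nat :=
  match a with
  | Var n => 4 * n
  | Neg a => 4 * form_code a + 1
  | Box a => 4 * form_code a + 2
  | Imp a b => 4 * to_nat (form_code a, form_code b) + 3
  end.

Lemma form_code_inj a b : form_code a = form_code b -> a = b.
Proof.
  revert b; induction a; destruct b; cbn [form_code]; intro Hcode; try lia.
  - f_equal; lia.
  - f_equal; apply IHa; lia.
  - f_equal; apply IHa; lia.
  - assert (Hpair : to_nat (form_code a1, form_code a2) = to_nat (form_code b1, form_code b2))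
      by lia.
    apply (f_equal of_nat) in Hpair. rewrite !cancel_of_to in Hpair.
    injection Hpair as H1 H2. f_equal; auto.
Qed.

Section Lindenbaum.
Variables (Gamma : form -> Prop) (alpha : form).

Fixpoint lindenbaum_stage (n : nat) : form -> Prop :=
  match n with
  | 0 => Gamma
  | S n => fun x => lindenbaum_stage n x \/
      (form_code x = n /\ ~ derives (adjoin (lindenbaum_stage n) x) alpha)
  end.

Definition lindenbaum (x : form) : Prop := exists n, lindenbaum_stage n x.

Lemma lindenbaum_stage_mono n m x : n <= m -> lindenbaum_stage n x -> lindenbaum_stage m x.
Proof. induction 1; simpl; auto. Qed.

Lemma lindenbaum_stage_underivable n :
  ~ derives Gamma alpha -> ~ derives (lindenbaum_stage n) alpha.
Proof.
  intro HGamma. induction n as [| n IHn]; simpl; auto. intro Hder.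
  destruct (classic (exists x, form_code x = n /\
                      ~ derives (adjoin (lindenbaum_stage n) x) alpha))
    as [[x [Hcode Hx]] | Hnone].
  - apply Hx. eapply derives_mono; [| exact Hder].
    intros y [Hy | [Hycode _]]; [left; exact Hy | right].
    apply form_code_inj. congruence.
  - apply IHn. eapply derives_mono; [| exact Hder].
    intros y [Hy | Hy]; [exact Hy | exfalso; apply Hnone; exists y; exact Hy].
Qed.

Lemma lindenbaum_compact a : derives lindenbaum a -> exists n, derives (lindenbaum_stage n) a.
Proof.
  induction 1 as [a [n Ha] | a Ha | a b _ [n1 D1] _ [n2 D2]].
  - exists n. apply d_hyp, Ha.
  - exists 0. apply d_ax, Ha.
  - exists (max n1 n2).
    assert (Hwiden : forall k, k <= max n1 n2 ->
              forall c, derives (lindenbaum_stage k) c -> derives (lindenbaum_stage (max n1 n2)) c).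
    { intros k Hk c. apply derives_mono. intro. apply lindenbaum_stage_mono, Hk. }
    apply (d_mp _ a); [apply (Hwiden n1) | apply (Hwiden n2)]; auto; lia.
Qed.

Lemma lindenbaum_extends x : Gamma x -> lindenbaum x.
Proof. intro Hx. exists 0. exact Hx. Qed.

Lemma lindenbaum_underivable : ~ derives Gamma alpha -> ~ derives lindenbaum alpha.
Proof.
  intros HGamma Hder. destruct (lindenbaum_compact _ Hder) as [n Hn].
  exact (lindenbaum_stage_underivable n HGamma Hn).
Qed.

Lemma lindenbaum_maximal x : ~ lindenbaum x -> derives (adjoin lindenbaum x) alpha.
Proof.
  intro Hx. apply NNPP. intro Hnot. apply Hx. exists (S (form_code x)). right.
  split; [reflexivity |]. intro Hder. apply Hnot.
  eapply derives_mono; [| exact Hder].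
  intros y [Hy | Hy]; [left; exists (form_code x); exact Hy | right; exact Hy].
Qed.

End Lindenbaum.

Section Canonical.
Variables (D : form -> Prop) (alpha : form).
Hypothesis D_underivable : ~ derives D alpha.
Hypothesis D_maximal : forall x, ~ D x -> derives (adjoin D x) alpha.

Lemma derives_mem a : derives D a -> D a.
Proof.
  intro Ha. apply NNPP. intro Hnot. apply D_underivable.
  exact (d_mp _ _ _ (deduction _ _ _ (D_maximal _ Hnot)) Ha).
Qed.

Lemma mem_mp a b : D (Imp a b) -> D a -> D b.
Proof. intros Hab Ha. apply derives_mem. eapply d_mp; apply d_hyp; eassumption. Qed.

Lemma mem_axiom a : Tm4d_axiom a -> D a.
Proof. intro Ha. apply derives_mem, d_ax, Ha. Qed.

Lemma mem_neg_alpha : D (Neg alpha).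
Proof.
  apply NNPP. intro Hnot. apply D_underivable.
  apply (derives_reductio _ alpha); [apply derives_imp_refl |].
  exact (deduction _ _ _ (D_maximal _ Hnot)).
Qed.

Lemma mem_neg a : D (Neg a) <-> ~ D a.
Proof.
  split.
  - intros Hneg Ha. apply D_underivable.
    apply (derives_reductio _ a); apply derives_imp_const, d_hyp; assumption.
  - intro Ha. apply NNPP. intro Hnot. apply Ha, derives_mem.
    apply (derives_reductio _ alpha).
    + apply derives_imp_const, d_hyp, mem_neg_alpha.
    + exact (deduction _ _ _ (D_maximal _ Hnot)).
Qed.

Lemma mem_neg_neg a : D (Neg (Neg a)) <-> D a.
Proof. rewrite !mem_neg. split; [apply NNPP | auto]. Qed.

Lemma mem_imp a b : D (Imp a b) <-> ~ D a \/ D b.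
Proof.
  split.
  - intro Hab. destruct (classic (D a)) as [Ha | Ha]; [right; eapply mem_mp; eauto | left; exact Ha].
  - intros [Ha | Hb].
    + apply derives_mem, deduction.
      apply (derives_reductio _ a); apply derives_imp_const, d_hyp.
      * left. apply mem_neg, Ha.
      * right. reflexivity.
    + exact (mem_mp _ _ (mem_axiom _ (ax_A1 b a)) Hb).
Qed.

Lemma mem_dia a : D (Dia a) <-> ~ D (Box (Neg a)).
Proof. apply mem_neg. Qed.

Lemma mem_box_elim a : D (Box a) -> D a.
Proof. apply mem_mp, mem_axiom, ax_T. Qed.

Lemma mem_box_imp a b : D (Box (Imp a b)) <-> D (Box (Neg a)) \/ D (Box b).
Proof.
  split.
  - intro Hab. destruct (classic (D (Box (Neg a)))) as [Hna | Hna]; [left; exact Hna | right].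
    apply (mem_mp (Dia a)); [exact (mem_mp _ _ (mem_axiom _ (ax_Kdet a b)) Hab) |].
    apply mem_dia, Hna.
  - intros [Hna | Hb].
    + apply (mem_mp _ _ (mem_axiom _ (ax_M1 a b))). apply mem_neg_neg, Hna.
    + exact (mem_mp _ _ (mem_axiom _ (ax_M2 a b)) Hb).
Qed.

Lemma mem_box_neg_imp a b : D (Box (Neg (Imp a b))) <-> D (Box a) /\ D (Box (Neg b)).
Proof.
  split.
  - intro Hnab. split; apply NNPP; intro Hnot; revert Hnab; apply mem_dia.
    + apply (mem_mp _ _ (mem_axiom _ (ax_M4 a b))), mem_dia.
      intro Hnna. apply Hnot. exact (mem_mp _ _ (mem_axiom _ (ax_DN2 a)) Hnna).
    + apply (mem_mp _ _ (mem_axiom _ (ax_M3 a b))), mem_dia, Hnot.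
  - intros [Ha Hnb]. apply NNPP. intro Hnot. apply mem_dia in Hnot.
    apply (mem_dia b); [| exact Hnb].
    exact (mem_mp _ _ (mem_mp _ _ (mem_axiom _ (ax_K2 a b)) Hnot) Ha).
Qed.

Definition canonical (a : form) : V4 :=
  if excluded_middle_informative (D (Box a)) then Tp
  else if excluded_middle_informative (D a) then Cp
  else if excluded_middle_informative (D (Box (Neg a))) then Fm
  else Cm.

Lemma canonical_Tp a : canonical a = Tp <-> D (Box a).
Proof.
  unfold canonical.
  repeat destruct excluded_middle_informative; split; intro; auto; easy.
Qed.

Lemma canonical_designated a : designated (canonical a) <-> D a.
Proof.
  unfold canonical, designated.
  repeat destruct excluded_middle_informative; split; intro; auto using mem_box_elim;
    intuition discriminate.
Qed.

Lemma canonical_Fm a : canonical a = Fm <-> D (Box (Neg a)).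
Proof.
  assert (Hconsistent : D (Box (Neg a)) -> ~ D a) by (intro; apply mem_neg, mem_box_elim; auto).
  unfold canonical.
  repeat destruct excluded_middle_informative; split; intro; auto; try easy;
    exfalso; eapply Hconsistent; eauto using mem_box_elim.
Qed.

Lemma V4_eq_intro x y :
  (x = Tp <-> y = Tp) -> (x = Fm <-> y = Fm) -> (designated x <-> designated y) -> x = y.
Proof. unfold designated. destruct x, y; intuition discriminate. Qed.

Lemma canonical_neg a : canonical (Neg a) = nV (canonical a).
Proof.
  apply V4_eq_intro.
  - rewrite canonical_Tp, <- canonical_Fm. destruct (canonical a); simpl; intuition discriminate.
  - rewrite canonical_Fm. split; intro H.
    + rewrite (proj2 (canonical_Tp a) (mem_mp _ _ (mem_axiom _ (ax_DN2 a)) H)).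
      reflexivity.
    + apply (mem_mp _ _ (mem_axiom _ (ax_DN1 a))), canonical_Tp.
      destruct (canonical a); simpl in H; congruence.
  - rewrite canonical_designated, mem_neg, <- canonical_designated. unfold designated.
    destruct (canonical a); simpl; intuition discriminate.
Qed.

Lemma canonical_box a : boxM (canonical a) (canonical (Box a)).
Proof.
  destruct (classic (D (Box a))) as [Hbox | Hbox].
  - rewrite (proj2 (canonical_Tp a) Hbox). simpl.
    apply canonical_Tp. exact (mem_mp _ _ (mem_axiom _ (ax_4 a)) Hbox).
  - assert (Ha : canonical a <> Tp) by (rewrite canonical_Tp; exact Hbox).
    assert (Hnot_des : ~ designated (canonical (Box a))) by (rewrite canonical_designated; exact Hbox).
    assert (Hnot_Tp : canonical (Box a) <> Tp)
      by (rewrite canonical_Tp; intro H; apply Hbox, mem_box_elim, H).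
    unfold designated in Hnot_des.
    destruct (canonical a); [congruence | ..]; simpl;
      destruct (canonical (Box a)); intuition.
Qed.

Lemma canonical_imp a b : canonical (Imp a b) = maxV (nV (canonical a)) (canonical b).
Proof.
  apply V4_eq_intro.
  - rewrite canonical_Tp, mem_box_imp, <- canonical_Fm, <- canonical_Tp.
    destruct (canonical a), (canonical b); simpl; intuition discriminate.
  - destruct (classic (D (Box (Imp a b)))) as [H | H].
    + rewrite (proj2 (canonical_Tp _) H).
      rewrite mem_box_imp, <- canonical_Fm, <- canonical_Tp in H.
      destruct (canonical a), (canonical b); simpl; intuition discriminate.
    + rewrite canonical_Fm, mem_box_neg_imp, <- canonical_Fm, <- canonical_Tp.
      destruct (canonical a), (canonical b); simpl; intuition discriminate.
  - rewrite canonical_designated, mem_imp, <- !canonical_designated. unfold designated.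
    destruct (canonical a), (canonical b); simpl; intuition discriminate.
Qed.

Lemma canonical_valuation : valuation canonical.
Proof.
  intros a b. split; [| split].
  - rewrite canonical_neg. destruct (canonical a); reflexivity.
  - apply canonical_box.
  - apply canonical_imp.
Qed.

End Canonical.

Lemma completeness Gamma a : entails Gamma a -> derives Gamma a.
Proof.
  intro Hent. apply NNPP. intro Hnot.
  pose proof (lindenbaum_underivable Gamma a Hnot) as Hund.
  pose proof (lindenbaum_maximal Gamma a) as Hmax.
  apply Hund, d_hyp, (canonical_designated _ a Hund Hmax), Hent.
  - exact (canonical_valuation _ a Hund Hmax).
  - intros g Hg. apply (canonical_designated _ a Hund Hmax), lindenbaum_extends, Hg.
Qed.

Theorem mainTheorem7 (Gamma : form -> Prop) (alpha : form) :
  derives Gamma alpha <-> entails Gamma alpha.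
Proof. split; [apply soundness | apply completeness]. Qed.
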